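(* Let $(G,\cdot,D,\star)$ be an invariant probabilistic metric group with identity $e$, where $\star$ is a continuous triangle function. Then $\Pi(G)$ is closed under $\odot$ and $(\Pi(G),\odot,\mathbb D,\star)$ is a complete invariant probabilistic metric group with identity element $\delta_e$.
   Context: A distribution function is a nondecreasing, left-continuous function $F:[-\infty,+\infty]\to[0,1]$ with $F(-\infty)=0$, $F(+\infty)=1$; $\Delta^+$ is the set of distribution functions with $F(0)=0$, ordered pointwise (a complete lattice with maximum $\mathcal H_0$, $\mathcal H_0(t)=0$ for $t\le0$, $1$ for $t>0$). A triangle function is a binary operation $\star$ on $\Delta^+$ that is commutative, associative, nondecreasing in each argument, with $F\star\mathcal H_0=F$. $F_n\xrightarrow{w}F$ means $F_n(t)\to F(t)$ at every continuity point $t\in\mathbb R$ of $F$; $\star$ is continuous if $F_n\star L_n\xrightarrow{w}F\star L$ whenever $F_n\xrightarrow{w}F$, $L_n\xrightarrow{w}L$. A probabilistic metric space $(G,D,\star)$ consists of a set $G$, a triangle function $\star$ and $D:G\times G\to\Delta^+$ with (i) $D(p,q)=\mathcal H_0$ iff $p=q$; (ii) $D(p,q)=D(q,p)$; (iii) $D(p,q)\star D(q,r)\le D(p,r)$. If $(G,\cdot)$ is a group and $D(pr,qr)=D(rp,rq)=D(p,q)$ for all $p,q,r$, it is an invariant probabilistic metric group. A sequence $(z_n)$ is Cauchy if $D(z_n,z_p)\xrightarrow{w}\mathcal H_0$ as $n,p\to\infty$; completeness means every Cauchy sequence has a point $z$ with $D(z_n,z)\xrightarrow{w}\mathcal H_0$.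 A map $f:G\to\Delta^+$ is probabilistic $1$-Lipschitz if $D(x,y)\star f(y)\le f(x)$ for all $x,y$. $\delta_a(y)=D(y,a)$. $\Pi(G)$ is the set of probabilistic $1$-Lipschitz maps $f$ for which there is a Cauchy sequence $(a_n)\subset G$ with $D(a_n,x)\xrightarrow{w}f(x)$ for all $x$. $\mathbb D(f,g)=\sup_{x\in G}f(x)\star g(x)$ for $f,g\in\Pi(G)$. For maps $f,g:G\to\Delta^+$, $(f\odot g)(x)=\sup_{y,z\in G,\ yz=x}f(y)\star g(z)$. *)

From Stdlib Require Import Reals ClassicalEpsilon.
Open Scope R_scope.

(** * Distribution functions and Delta^+
    A distribution function F : [-oo,+oo] -> [0,1] has the fixed values
    F(-oo)=0, F(+oo)=1, so it is represented by its restriction to R. *)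

Definition nondecr (F : R -> R) : Prop := forall s t, s <= t -> F s <= F t.

Definition left_cont (F : R -> R) : Prop :=
  forall t eps, 0 < eps -> exists delta, 0 < delta /\
    forall s, t - delta < s < t -> Rabs (F s - F t) < eps.

Definition Dplus (F : R -> R) : Prop :=
  nondecr F /\ left_cont F /\ (forall t, 0 <= F t <= 1) /\ F 0 = 0.

Definition Dle (F G : R -> R) : Prop := forall t, F t <= G t.

Definition H0 (t : R) : R := if Rle_dec t 0 then 0 else 1.

Definition is_Dsup (S : (R -> R) -> Prop) (F : R -> R) : Prop :=
  Dplus F /\ (forall H, S H -> Dle H F) /\
  (forall F', Dplus F' -> (forall H, S H -> Dle H F') -> Dle F F').

Definition DSup (S : (R -> R) -> Prop) : R -> R :=
  epsilon (inhabits H0) (is_Dsup S).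

Definition is_triangle_function (star : (R -> R) -> (R -> R) -> (R -> R)) : Prop :=
  (forall F L, Dplus F -> Dplus L -> Dplus (star F L)) /\
  (forall F L, Dplus F -> Dplus L -> star F L = star L F) /\
  (forall F L M, Dplus F -> Dplus L -> Dplus M ->
     star F (star L M) = star (star F L) M) /\
  (forall F F' L, Dplus F -> Dplus F' -> Dplus L -> Dle F F' ->
     Dle (star F L) (star F' L)) /\
  (forall F, Dplus F -> star F H0 = F).

Definition wconv (Fn : nat -> R -> R) (F : R -> R) : Prop :=
  forall t, continuity_pt F t -> Un_cv (fun n => Fn n t) (F t).

Definition wconv2 (Fnp : nat -> nat -> R -> R) (F : R -> R) : Prop :=
  forall t, continuity_pt F t -> forall eps, 0 < eps ->
    exists N, forall n p, (n >= N)%nat -> (p >= N)%nat ->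
      Rabs (Fnp n p t - F t) < eps.

Definition continuous_tf (star : (R -> R) -> (R -> R) -> (R -> R)) : Prop :=
  forall (Fn Ln : nat -> R -> R) F L,
    (forall n, Dplus (Fn n)) -> (forall n, Dplus (Ln n)) -> Dplus F -> Dplus L ->
    wconv Fn F -> wconv Ln L -> wconv (fun n => star (Fn n) (Ln n)) (star F L).

Definition is_group_on {T : Type} (P : T -> Prop) (mul : T -> T -> T) (e : T) : Prop :=
  P e /\
  (forall x y, P x -> P y -> P (mul x y)) /\
  (forall x y z, P x -> P y -> P z -> mul x (mul y z) = mul (mul x y) z) /\
  (forall x, P x -> mul e x = x /\ mul x e = x) /\
  (forall x, P x -> exists y, P y /\ mul x y = e /\ mul y x = e).

Definition is_PM_on {T : Type} (P : T -> Prop)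
  (star : (R -> R) -> (R -> R) -> (R -> R)) (D : T -> T -> R -> R) : Prop :=
  (forall p q, P p -> P q -> Dplus (D p q)) /\
  (forall p q, P p -> P q -> (D p q = H0 <-> p = q)) /\
  (forall p q, P p -> P q -> D p q = D q p) /\
  (forall p q r, P p -> P q -> P r -> Dle (star (D p q) (D q r)) (D p r)).

Definition is_invariant_on {T : Type} (P : T -> Prop) (mul : T -> T -> T)
  (D : T -> T -> R -> R) : Prop :=
  forall p q r, P p -> P q -> P r ->
    D (mul p r) (mul q r) = D p q /\ D (mul r p) (mul r q) = D p q.

Definition is_Cauchy {T : Type} (D : T -> T -> R -> R) (z : nat -> T) : Prop :=
  wconv2 (fun n p => D (z n) (z p)) H0.

Definition is_complete_on {T : Type} (P : T -> Prop) (D : T -> T -> R -> R) : Prop :=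
  forall z : nat -> T, (forall n, P (z n)) -> is_Cauchy D z ->
    exists z0, P z0 /\ wconv (fun n => D (z n) z0) H0.

Definition is_PLip1 {G : Type} (D : G -> G -> R -> R)
  (star : (R -> R) -> (R -> R) -> (R -> R)) (f : G -> R -> R) : Prop :=
  (forall x, Dplus (f x)) /\ (forall x y, Dle (star (D x y) (f y)) (f x)).

Definition Pi {G : Type} (D : G -> G -> R -> R)
  (star : (R -> R) -> (R -> R) -> (R -> R)) (f : G -> R -> R) : Prop :=
  is_PLip1 D star f /\
  exists a : nat -> G, is_Cauchy D a /\ forall x, wconv (fun n => D (a n) x) (f x).

Definition bbD {G : Type} (star : (R -> R) -> (R -> R) -> (R -> R))
  (f g : G -> R -> R) : R -> R :=
  DSup (fun H => exists x, H = star (f x) (g x)).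

Definition odot {G : Type} (mul : G -> G -> G)
  (star : (R -> R) -> (R -> R) -> (R -> R)) (f g : G -> R -> R) : G -> R -> R :=
  fun x => DSup (fun H => exists y z, mul y z = x /\ H = star (f y) (g z)).

Definition delta {G : Type} (D : G -> G -> R -> R) (a : G) : G -> R -> R :=
  fun y => D y a.

From Stdlib Require Import Reals ClassicalEpsilon Lra Lia Classical FunctionalExtensionality.
Open Scope R_scope.

(* Every [f] in [Pi D star] has the form [x |-> lim D (a n) x] for a Cauchy
   sequence [a], and for Cauchy [a], [b] the distances [D (a n) (b n)] converge
   weakly: by the triangle inequality [D (a n) (b n)] is bounded below by
   [D (a n) (a m) * D (a m) (b m) * D (b m) (b n)], whose outer factors tend to
   [H0], and continuity of [star] turns this into "limsup <= liminf".  In these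
   terms [bbD] is the limit of [D (a n) (b n)], [odot] multiplies representing
   sequences termwise and [delta D x] is represented by the constant sequence, so
   the group, metric and invariance axioms pass to the limit from [G].
   Completeness follows by a diagonal argument.  Weak convergence is handled
   through a characterisation that avoids continuity points, which are dense for
   monotone functions. *)

Definition eventually (P : nat -> Prop) : Prop := exists N, forall n, (n >= N)%nat -> P n.
Definition frequently (P : nat -> Prop) : Prop := forall N, exists n, (n >= N)%nat /\ P n.

Lemma eventually_and (P Q : nat -> Prop) :
  eventually P -> eventually Q -> eventually (fun n => P n /\ Q n).
Proof.
  intros [N1 H1] [N2 H2]. exists (max N1 N2). intros n Hn.
  split; [apply H1 | apply H2]; lia.
Qed.

Lemma eventually_impl (P Q : nat -> Prop) :
  eventually P -> (forall n, P n -> Q n) -> eventually Q.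
Proof. intros [N H] HPQ. exists N. auto. Qed.

Lemma eventually_forall (P : nat -> Prop) : (forall n, P n) -> eventually P.
Proof. intros H. exists 0%nat. auto. Qed.

Lemma not_eventually_frequently (P : nat -> Prop) :
  ~ eventually P -> frequently (fun n => ~ P n).
Proof.
  intros H N. apply NNPP. intros H'. apply H. exists N. intros n Hn.
  apply NNPP. intros Hp. apply H'. exists n. auto.
Qed.

Lemma frequently_subseq (P : nat -> Prop) :
  frequently P -> exists nn : nat -> nat, forall j, (nn j >= j)%nat /\ P (nn j).
Proof.
  intros H. exists (fun j => epsilon (inhabits 0%nat) (fun n => (n >= j)%nat /\ P n)).
  intros j. exact (epsilon_spec (inhabits 0%nat) (fun n => (n >= j)%nat /\ P n) (H j)).
Qed.

Lemma Dplus_nondecr F : Dplus F -> nondecr F.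
Proof. intros [H _]. exact H. Qed.

Lemma Dplus_left_cont F : Dplus F -> left_cont F.
Proof. intros [_ [H _]]. exact H. Qed.

Lemma Dplus_bounds F t : Dplus F -> 0 <= F t <= 1.
Proof. intros [_ [_ [H _]]]. apply H. Qed.

Lemma Dplus_nonpos F t : Dplus F -> t <= 0 -> F t = 0.
Proof.
  intros HF Ht. pose proof (Dplus_nondecr F HF t 0 Ht).
  destruct HF as [_ [_ [Hb H0']]]. specialize (Hb t). lra.
Qed.

Lemma Dle_refl F : Dle F F.
Proof. intros t. lra. Qed.

Lemma Dle_trans F L M : Dle F L -> Dle L M -> Dle F M.
Proof. intros H1 H2 t. specialize (H1 t). specialize (H2 t). lra. Qed.

Lemma Dle_antisym F L : Dle F L -> Dle L F -> F = L.
Proof.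
  intros H1 H2. apply functional_extensionality. intros t.
  specialize (H1 t). specialize (H2 t). lra.
Qed.

Lemma step_Dplus s c : 0 <= s -> 0 <= c <= 1 ->
  Dplus (fun r => if Rle_dec r s then 0 else c).
Proof.
  intros Hs Hc. split; [|split; [|split]].
  - intros a b Hab. destruct (Rle_dec a s), (Rle_dec b s); lra.
  - intros a eps Heps. destruct (Rle_dec a s).
    + exists 1. split; [lra|]. intros b Hb. destruct (Rle_dec b s); [|lra].
      rewrite Rminus_diag, Rabs_R0. lra.
    + exists (a - s). split; [lra|]. intros b Hb. destruct (Rle_dec b s); [lra|].
      rewrite Rminus_diag, Rabs_R0. lra.
  - intros a. destruct (Rle_dec a s); lra.
  - destruct (Rle_dec 0 s); lra.
Qed.

Lemma H0_Dplus : Dplus H0.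
Proof. apply (step_Dplus 0 1); lra. Qed.

Lemma left_cont_le F t c : left_cont F -> (forall s, s < t -> F s <= c) -> F t <= c.
Proof.
  intros Hlc H. destruct (Rle_dec (F t) c) as [|Hn]; auto. exfalso.
  destruct (Hlc t (F t - c)) as [d [Hd Hs]]; [lra|].
  specialize (Hs (t - d / 2)). assert (Hr : t - d < t - d / 2 < t) by lra.
  specialize (Hs Hr). apply Rabs_def2 in Hs. specialize (H (t - d / 2)). lra.
Qed.

Lemma continuity_pt_eps f t : continuity_pt f t -> forall eps, 0 < eps ->
  exists d, 0 < d /\ forall y, Rabs (y - t) < d -> Rabs (f y - f t) < eps.
Proof.
  intros Hc eps He. destruct (Hc eps He) as [d [Hd H]]. exists d. split; auto.
  intros y Hy. destruct (Req_dec y t) as [->|Hne].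
  - rewrite Rminus_diag, Rabs_R0. auto.
  - apply (H y). split; [split; [exact I | auto]|]. exact Hy.
Qed.

Lemma eps_continuity_pt f t : (forall eps, 0 < eps ->
  exists d, 0 < d /\ forall y, Rabs (y - t) < d -> Rabs (f y - f t) < eps) ->
  continuity_pt f t.
Proof.
  intros H eps He. destruct (H eps He) as [d [Hd Hy]]. exists d. split; auto.
  intros y [_ Hyd]. apply Hy. exact Hyd.
Qed.

Lemma H0_continuity_pt t : t <> 0 -> continuity_pt H0 t.
Proof.
  intros Ht. apply eps_continuity_pt. intros eps He. exists (Rabs t).
  split; [apply Rabs_pos_lt; auto|].
  intros y Hy. unfold H0, Rabs in *.
  destruct (Rcase_abs t), (Rcase_abs (y - t)), (Rle_dec y 0), (Rle_dec t 0);
    try lra; rewrite Rminus_diag; destruct (Rcase_abs 0); lra.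
Qed.

(** * Continuity points of monotone functions *)

Lemma nondecr_continuity_pt F r : nondecr F ->
  (forall eps, 0 < eps -> exists x y, x < r < y /\ F y - F x < eps) ->
  continuity_pt F r.
Proof.
  intros Hnd Hosc. apply eps_continuity_pt. intros eps He.
  destruct (Hosc eps He) as [x [y [Hxy Hxy']]].
  exists (Rmin (r - x) (y - r)). split; [apply Rmin_glb_lt; lra|].
  intros z Hz. pose proof (Rmin_l (r - x) (y - r)). pose proof (Rmin_r (r - x) (y - r)).
  apply Rabs_def2 in Hz.
  pose proof (Hnd x z ltac:(lra)). pose proof (Hnd z y ltac:(lra)).
  pose proof (Hnd x r ltac:(lra)). pose proof (Hnd r y ltac:(lra)).
  apply Rabs_def1; lra.
Qed.

(* Of the two middle quarters of the current interval keep the one on which [F]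
   increases less: the increase is at least halved and the new interval lies in
   the interior of the old one. *)
Fixpoint quarter_itv (F : R -> R) (a b : R) (k : nat) : R * R :=
  match k with
  | O => (a, b)
  | S k => let (x, y) := quarter_itv F a b k in
           let h := (y - x) / 4 in
           if Rle_dec (F (x + 2 * h) - F (x + h)) (F (x + 3 * h) - F (x + 2 * h))
           then (x + h, x + 2 * h) else (x + 2 * h, x + 3 * h)
  end.

Section QuarterItv.
Variables (F : R -> R) (a b : R).
Hypothesis Hnd : nondecr F.
Hypothesis Hab : a < b.

Let lo k := fst (quarter_itv F a b k).
Let hi k := snd (quarter_itv F a b k).

Lemma quarter_itv_step k : lo k < hi k ->
  lo k < lo (S k) /\ lo (S k) < hi (S k) /\ hi (S k) < hi k /\
  F (hi (S k)) - F (lo (S k)) <= (F (hi k) - F (lo k)) / 2.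
Proof.
  unfold lo, hi. simpl. destruct (quarter_itv F a b k) as [x y]. simpl. intros Hxy.
  set (h := (y - x) / 4).
  assert (Hh : 0 < h) by (unfold h; lra).
  pose proof (Hnd x (x + h) ltac:(lra)).
  pose proof (Hnd (x + 3 * h) y ltac:(unfold h; lra)).
  pose proof (Hnd (x + h) (x + 2 * h) ltac:(lra)).
  pose proof (Hnd (x + 2 * h) (x + 3 * h) ltac:(lra)).
  destruct (Rle_dec _ _); simpl; repeat split; try lra; unfold h; lra.
Qed.

Lemma quarter_itv_osc k :
  lo k < hi k /\ F (hi k) - F (lo k) <= (F b - F a) * (/ 2) ^ k.
Proof.
  induction k as [|k [IH1 IH2]].
  - unfold lo, hi. simpl. lra.
  - destruct (quarter_itv_step k IH1) as [_ [H2 [_ H4]]]. split; auto.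
    simpl pow. lra.
Qed.

Lemma quarter_itv_nested k m : (k <= m)%nat -> lo k <= lo m /\ hi m <= hi k.
Proof.
  intros Hkm. induction Hkm as [|m Hkm IH]; [lra|].
  destruct (quarter_itv_step m (proj1 (quarter_itv_osc m))) as [H1 [H2 [H3 _]]].
  lra.
Qed.

Lemma quarter_itv_lo_hi k m : lo k < hi m.
Proof.
  destruct (quarter_itv_nested k (max k m) ltac:(lia)) as [H1 _].
  destruct (quarter_itv_nested m (max k m) ltac:(lia)) as [_ H2].
  pose proof (proj1 (quarter_itv_osc (max k m))). lra.
Qed.

Lemma quarter_itv_common_point : exists r, forall k, lo k < r < hi k.
Proof.
  set (E := fun z => exists k, z = lo k).
  assert (HE : bound E).
  { exists (hi O). intros z [k ->]. left. apply quarter_itv_lo_hi. }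
  destruct (completeness E HE (ex_intro _ (lo O) (ex_intro _ O eq_refl))) as [r [Hub Hlub]].
  exists r. intros k.
  destruct (quarter_itv_step k (proj1 (quarter_itv_osc k))) as [H1 [_ [H3 _]]].
  assert (lo (S k) <= r) by (apply Hub; exists (S k); reflexivity).
  assert (r <= hi (S k)) by (apply Hlub; intros z [j ->]; left; apply quarter_itv_lo_hi).
  lra.
Qed.

End QuarterItv.

Lemma nondecr_exists_continuity_pt F a b : nondecr F -> (forall t, 0 <= F t <= 1) ->
  a < b -> exists r, a < r < b /\ continuity_pt F r.
Proof.
  intros Hnd Hb Hab.
  destruct (quarter_itv_common_point F a b Hnd Hab) as [r Hr].
  exists r. split; [exact (Hr O)|].
  apply nondecr_continuity_pt; auto. intros eps He.
  destruct (pow_lt_1_zero (/ 2) ltac:(rewrite Rabs_right; lra) eps He) as [k Hk].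
  specialize (Hk k (le_n _)). rewrite Rabs_right in Hk by (apply Rle_ge, pow_le; lra).
  destruct (quarter_itv_osc F a b Hnd Hab k) as [_ Hosc].
  exists (fst (quarter_itv F a b k)), (snd (quarter_itv F a b k)). split; [apply Hr|].
  pose proof (Hb a). pose proof (Hb b).
  assert ((F b - F a) * (/ 2) ^ k <= (/ 2) ^ k).
  { rewrite <- (Rmult_1_l ((/ 2) ^ k)) at 2.
    apply Rmult_le_compat_r; [apply pow_le|]; lra. }
  lra.
Qed.

(** * Weak convergence *)

(* [wconv u F] rephrased without continuity points; the two agree on
   distribution functions. *)
Definition wlim (u : nat -> R -> R) (F : R -> R) : Prop :=
  (forall t eps, 0 < eps -> eventually (fun n => F t - eps < u n t)) /\
  (forall s t eps, s < t -> 0 < eps -> eventually (fun n => u n s < F t + eps)).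

Lemma wlim_Dle u v F L : Dplus F -> wlim u F -> wlim v L ->
  eventually (fun n => Dle (u n) (v n)) -> Dle F L.
Proof.
  intros HF [Hu _] [_ Hv] Huv t. apply left_cont_le; [apply Dplus_left_cont; auto|].
  intros s Hs. apply Rnot_lt_le. intros Hlt.
  set (eps := (F s - L t) / 3).
  assert (He : 0 < eps) by (unfold eps; lra).
  destruct (eventually_and _ _ (eventually_and _ _ (Hu s eps He) (Hv s t eps Hs He)) Huv)
    as [N HN].
  destruct (HN N (le_n _)) as [[H1 H2] H3]. specialize (H3 s). unfold eps in *. lra.
Qed.

Lemma wlim_unique u F L : Dplus F -> Dplus L -> wlim u F -> wlim u L -> F = L.
Proof.
  intros HF HL H1 H2.
  apply Dle_antisym; eapply wlim_Dle; eauto; apply eventually_forall; intros; apply Dle_refl.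
Qed.

Lemma wlim_const F : Dplus F -> wlim (fun _ => F) F.
Proof.
  intros HF. split.
  - intros t eps He. apply eventually_forall. intros. lra.
  - intros s t eps Hst He. apply eventually_forall. intros.
    pose proof (Dplus_nondecr F HF s t). lra.
Qed.

Lemma wlim_wconv u F : (forall n, Dplus (u n)) -> Dplus F -> wlim u F -> wconv u F.
Proof.
  intros Hu HF [Hlo Hhi] t Hc eps He.
  destruct (continuity_pt_eps _ _ Hc (eps / 2)) as [d [Hd Hdd]]; [lra|].
  destruct (eventually_and _ _ (Hlo t eps He) (Hhi t (t + d / 2) (eps / 2) ltac:(lra) ltac:(lra)))
    as [N HN].
  exists N. intros n Hn. specialize (HN n Hn).
  specialize (Hdd (t + d / 2)).
  assert (Rabs (t + d / 2 - t) < d).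
  { replace (t + d / 2 - t) with (d / 2) by ring. rewrite Rabs_right; lra. }
  specialize (Hdd H). apply Rabs_def2 in Hdd. apply Rabs_def1; lra.
Qed.

(* Continuity points of [F] are dense, so they can be inserted below [t] (where
   [F] is left continuous) and between [s] and [t]. *)
Lemma wconv_wlim u F : (forall n, Dplus (u n)) -> Dplus F -> wconv u F -> wlim u F.
Proof.
  intros Hu HF Hw.
  assert (Hcp : forall a b, a < b -> exists r, a < r < b /\ continuity_pt F r).
  { intros a b Hab. apply nondecr_exists_continuity_pt; auto using Dplus_nondecr.
    intros t. apply Dplus_bounds; auto. }
  split.
  - intros t eps He. destruct (Dplus_left_cont F HF t (eps / 2)) as [d [Hd Hdd]]; [lra|].
    destruct (Hcp (t - d) t ltac:(lra)) as [r [Hr Hc]].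
    destruct (Hw r Hc (eps / 2)) as [N HN]; [lra|]. exists N. intros n Hn.
    specialize (HN n Hn). apply Rabs_def2 in HN.
    specialize (Hdd r Hr). apply Rabs_def2 in Hdd.
    pose proof (Dplus_nondecr _ (Hu n) r t ltac:(lra)). lra.
  - intros s t eps Hst He.
    destruct (Hcp s t Hst) as [r [Hr Hc]].
    destruct (Hw r Hc eps He) as [N HN]. exists N. intros n Hn.
    specialize (HN n Hn). apply Rabs_def2 in HN.
    pose proof (Dplus_nondecr _ (Hu n) s r ltac:(lra)).
    pose proof (Dplus_nondecr F HF r t ltac:(lra)). lra.
Qed.

Definition to_H0 (u : nat -> R -> R) : Prop :=
  forall t eps, 0 < t -> 0 < eps -> eventually (fun n => 1 - eps < u n t).

Lemma to_H0_wlim u : (forall n, Dplus (u n)) -> to_H0 u -> wlim u H0.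
Proof.
  intros Hu Hh. split.
  - intros t eps He. unfold H0. destruct (Rle_dec t 0).
    + apply eventually_forall. intros n. pose proof (Dplus_bounds _ t (Hu n)). lra.
    + apply (eventually_impl _ _ (Hh t eps ltac:(lra) He)). intros. lra.
  - intros s t eps Hst He. apply eventually_forall. intros n. unfold H0.
    destruct (Rle_dec t 0).
    + rewrite (Dplus_nonpos _ s (Hu n)); lra.
    + pose proof (Dplus_bounds _ s (Hu n)). lra.
Qed.

Lemma wlim_to_H0 u : wlim u H0 -> to_H0 u.
Proof.
  intros [Hlo _] t eps Ht He. apply (eventually_impl _ _ (Hlo t eps He)).
  intros n. unfold H0. destruct (Rle_dec t 0); lra.
Qed.

Lemma to_H0_Dle u v : to_H0 u -> (forall n, Dle (u n) (v n)) -> to_H0 v.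
Proof.
  intros Hh Hle t eps Ht He. apply (eventually_impl _ _ (Hh t eps Ht He)).
  intros n Hn. specialize (Hle n t). lra.
Qed.

Lemma to_H0_subseq u nn : to_H0 u -> (forall j, (nn j >= j)%nat) ->
  to_H0 (fun j => u (nn j)).
Proof.
  intros Hh Hn t eps Ht He. destruct (Hh t eps Ht He) as [N HN]. exists N.
  intros j Hj. apply HN. specialize (Hn j). lia.
Qed.

Lemma to_H0_diag u : (forall k, Dplus (u k)) ->
  (forall k, 1 - / INR (S k) < u k (/ INR (S k))) -> to_H0 u.
Proof.
  intros Hu Hdiag t eps Ht He.
  destruct (archimed_cor1 (Rmin t eps)) as [K [HK HK0]]; [apply Rmin_glb_lt; auto|].
  exists K. intros k Hk.
  assert (/ INR (S k) <= / INR K).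
  { apply Rinv_le_contravar; [apply lt_0_INR; auto|]. apply le_INR. lia. }
  pose proof (Rmin_l t eps). pose proof (Rmin_r t eps). specialize (Hdiag k).
  pose proof (Dplus_nondecr _ (Hu k) (/ INR (S k)) t ltac:(lra)). lra.
Qed.

(** * Existence of weak limits *)

Definition limsup_le_liminf (u : nat -> R -> R) : Prop :=
  forall s t c eps, s < t -> 0 < eps ->
    frequently (fun n => c < u n s) -> eventually (fun n => c - eps < u n t).

Lemma lub_approx E m eps : is_lub E m -> 0 < eps -> exists c, E c /\ m - eps < c.
Proof.
  intros [Hub Hl] He. apply NNPP. intros H.
  assert (is_upper_bound E (m - eps)).
  { intros z Hz. apply Rnot_lt_le. intros Hlt. apply H. exists z. auto. }
  specialize (Hl _ H0). lra.
Qed.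

Section WeakLimit.
Variable u : nat -> R -> R.
Hypothesis Hu : forall n, Dplus (u n).

Definition below_liminf (t c : R) : Prop :=
  c <= 0 \/ exists r, r < t /\ eventually (fun n => c < u n r).

Lemma below_liminf_le_1 t c : below_liminf t c -> c <= 1.
Proof.
  intros [Hc | [r [_ [N HN]]]]; [lra|].
  specialize (HN N (le_n _)). pose proof (Dplus_bounds _ r (Hu N)). lra.
Qed.

Lemma below_liminf_lub t : {m | is_lub (below_liminf t) m}.
Proof.
  apply completeness.
  - exists 1. intros c Hc. apply (below_liminf_le_1 t c Hc).
  - exists 0. left. lra.
Qed.

(* The candidate limit at [t]: the supremum of the levels that [u n] eventually
   exceeds somewhere to the left of [t]. *)
Definition liminf_fn (t : R) : R := proj1_sig (below_liminf_lub t).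

Lemma liminf_fn_lub t : is_lub (below_liminf t) (liminf_fn t).
Proof. unfold liminf_fn. destruct (below_liminf_lub t). auto. Qed.

Lemma liminf_fn_nonneg t : 0 <= liminf_fn t.
Proof. apply (proj1 (liminf_fn_lub t)). left. lra. Qed.

Lemma liminf_fn_nondecr : nondecr liminf_fn.
Proof.
  intros s t Hst. apply (proj2 (liminf_fn_lub s)). intros c Hc.
  apply (proj1 (liminf_fn_lub t)).
  destruct Hc as [Hc | [r [Hr Hev]]]; [left; auto | right; exists r; split; auto; lra].
Qed.

Lemma liminf_fn_Dplus : Dplus liminf_fn.
Proof.
  split; [exact liminf_fn_nondecr | split; [|split]].
  - intros t eps He.
    destruct (lub_approx _ _ (eps / 2) (liminf_fn_lub t) ltac:(lra)) as [c [Hc Hcl]].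
    destruct Hc as [Hc | [r [Hr Hev]]].
    + exists 1. split; [lra|]. intros s Hs. pose proof (liminf_fn_nonneg s).
      pose proof (liminf_fn_nondecr s t ltac:(lra)). apply Rabs_def1; lra.
    + exists (t - r). split; [lra|]. intros s Hs.
      assert (c <= liminf_fn s)
        by (apply (proj1 (liminf_fn_lub s)); right; exists r; split; [lra | auto]).
      pose proof (liminf_fn_nondecr s t ltac:(lra)). apply Rabs_def1; lra.
  - intros t. split; [apply liminf_fn_nonneg|].
    apply (proj2 (liminf_fn_lub t)). intros c Hc. apply (below_liminf_le_1 t c Hc).
  - apply Rle_antisym; [|apply liminf_fn_nonneg]. apply (proj2 (liminf_fn_lub 0)).
    intros c [Hc | [r [Hr [N HN]]]]; [lra|]. specialize (HN N (le_n _)).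
    rewrite (Dplus_nonpos _ r (Hu N)) in HN by lra. lra.
Qed.

Lemma liminf_fn_wlim : limsup_le_liminf u -> wlim u liminf_fn.
Proof.
  intros Hsup. split.
  - intros t eps He. destruct (lub_approx _ _ eps (liminf_fn_lub t) He) as [c [Hc Hcl]].
    destruct Hc as [Hc | [r [Hr Hev]]].
    + apply eventually_forall. intros n. pose proof (Dplus_bounds _ t (Hu n)). lra.
    + apply (eventually_impl _ _ Hev). intros n Hn.
      pose proof (Dplus_nondecr _ (Hu n) r t ltac:(lra)). lra.
  - intros s t eps Hst He. apply NNPP. intros Hn. apply not_eventually_frequently in Hn.
    assert (Hfr : frequently (fun n => liminf_fn t + eps / 2 < u n s)).
    { intros N. destruct (Hn N) as [n [Hn1 Hn2]]. exists n. split; auto. lra. }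
    specialize (Hsup s ((s + t) / 2) _ (eps / 4) ltac:(lra) ltac:(lra) Hfr).
    assert (below_liminf t (liminf_fn t + eps / 8)).
    { right. exists ((s + t) / 2). split; [lra|].
      apply (eventually_impl _ _ Hsup). intros. lra. }
    pose proof (proj1 (liminf_fn_lub t) _ H). lra.
Qed.

End WeakLimit.

Lemma wlim_exists u : (forall n, Dplus (u n)) -> limsup_le_liminf u ->
  exists F, Dplus F /\ wlim u F.
Proof.
  intros Hu Hsup. exists (liminf_fn u Hu).
  split; [apply liminf_fn_Dplus | apply liminf_fn_wlim; auto].
Qed.

Definition to_H0_2 (K : nat -> nat -> R -> R) : Prop :=
  forall t eps, 0 < t -> 0 < eps ->
    exists N, forall n m, (n >= N)%nat -> (m >= N)%nat -> 1 - eps < K n m t.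

Definition diverging_pair (nn mm : nat -> nat) : Prop :=
  forall j, (nn j >= j /\ mm j >= j)%nat.

Lemma diverging_pair_sym nn mm : diverging_pair nn mm -> diverging_pair mm nn.
Proof. intros H j. destruct (H j). auto. Qed.

Lemma to_H0_2_pair K nn mm : to_H0_2 K -> diverging_pair nn mm ->
  to_H0 (fun j => K (nn j) (mm j)).
Proof.
  intros HK Hp t eps Ht He. destruct (HK t eps Ht He) as [N HN]. exists N.
  intros j Hj. destruct (Hp j). apply HN; lia.
Qed.

Lemma to_H0_2_of_pairs K :
  (forall nn mm, diverging_pair nn mm -> to_H0 (fun j => K (nn j) (mm j))) -> to_H0_2 K.
Proof.
  intros HP t eps Ht He. apply NNPP. intros Hn.
  set (bad := fun j (p : nat * nat) =>
    (fst p >= j)%nat /\ (snd p >= j)%nat /\ K (fst p) (snd p) t <= 1 - eps).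
  assert (Hbad : forall j, exists p, bad j p).
  { intros j. apply NNPP. intros Hn2. apply Hn. exists j. intros n m Hn' Hm'.
    apply Rnot_le_lt. intros Hle. apply Hn2. exists (n, m). unfold bad. simpl. auto. }
  set (pp := fun j => epsilon (inhabits (0%nat, 0%nat)) (bad j)).
  assert (Hpp : forall j, bad j (pp j)) by (intros j; apply epsilon_spec; auto).
  destruct (HP (fun j => fst (pp j)) (fun j => snd (pp j))) with t eps as [N HN]; auto.
  { intros j. destruct (Hpp j) as [H1 [H2 _]]. auto. }
  specialize (HN N (le_n _)). destruct (Hpp N) as [_ [_ H3]]. simpl in HN. lra.
Qed.

Lemma wconv2_to_H0_2 K : wconv2 K H0 -> to_H0_2 K.
Proof.
  intros Hw t eps Ht He.
  destruct (Hw t (H0_continuity_pt t ltac:(lra)) eps He) as [N HN].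
  exists N. intros n m Hn Hm. specialize (HN n m Hn Hm). unfold H0 in HN.
  destruct (Rle_dec t 0); [lra|]. apply Rabs_def2 in HN. lra.
Qed.

Lemma to_H0_2_wconv2 K : (forall n m, Dplus (K n m)) -> to_H0_2 K -> wconv2 K H0.
Proof.
  intros HD HK t Hc eps He. unfold H0. destruct (Rle_dec t 0) as [Ht|Ht].
  - exists O. intros n m _ _. rewrite (Dplus_nonpos _ t (HD n m) Ht).
    rewrite Rminus_diag, Rabs_R0. auto.
  - destruct (HK t eps ltac:(lra) He) as [N HN]. exists N. intros n m Hn Hm.
    specialize (HN n m Hn Hm). pose proof (Dplus_bounds _ t (HD n m)). apply Rabs_def1; lra.
Qed.

Section TriangleFunction.
Variable star : (R -> R) -> (R -> R) -> (R -> R).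
Hypothesis Htri : is_triangle_function star.
Hypothesis Hcont : continuous_tf star.

Lemma star_Dplus F L : Dplus F -> Dplus L -> Dplus (star F L).
Proof. destruct Htri as [H _]. auto. Qed.

Lemma star_comm F L : Dplus F -> Dplus L -> star F L = star L F.
Proof. destruct Htri as [_ [H _]]. auto. Qed.

Lemma star_assoc F L M : Dplus F -> Dplus L -> Dplus M ->
  star F (star L M) = star (star F L) M.
Proof. destruct Htri as [_ [_ [H _]]]. auto. Qed.

Lemma star_Dle_l F F' L : Dplus F -> Dplus F' -> Dplus L -> Dle F F' ->
  Dle (star F L) (star F' L).
Proof. destruct Htri as [_ [_ [_ [H _]]]]. auto. Qed.

Lemma star_H0_r F : Dplus F -> star F H0 = F.
Proof. destruct Htri as [_ [_ [_ [_ H]]]]. auto. Qed.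

Lemma star_Dle_r F L L' : Dplus F -> Dplus L -> Dplus L' -> Dle L L' ->
  Dle (star F L) (star F L').
Proof.
  intros. rewrite (star_comm F L), (star_comm F L'); auto. apply star_Dle_l; auto.
Qed.

Lemma star_H0_l F : Dplus F -> star H0 F = F.
Proof. intros. rewrite star_comm; auto using H0_Dplus. apply star_H0_r. auto. Qed.

Lemma star_wlim u v F L : (forall n, Dplus (u n)) -> (forall n, Dplus (v n)) ->
  Dplus F -> Dplus L -> wlim u F -> wlim v L ->
  wlim (fun n => star (u n) (v n)) (star F L).
Proof.
  intros Hu Hv HF HL H1 H2. apply wconv_wlim; auto using star_Dplus.
  apply Hcont; auto; apply wlim_wconv; auto.
Qed.

Lemma star_to_H0 u v : (forall n, Dplus (u n)) -> (forall n, Dplus (v n)) ->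
  to_H0 u -> to_H0 v -> to_H0 (fun n => star (u n) (v n)).
Proof.
  intros Hu Hv H1 H2. apply wlim_to_H0. rewrite <- (star_H0_r H0) by apply H0_Dplus.
  apply star_wlim; auto using H0_Dplus, to_H0_wlim.
Qed.

Lemma star_to_H0_wlim x u y F :
  (forall n, Dplus (x n)) -> (forall n, Dplus (u n)) -> (forall n, Dplus (y n)) -> Dplus F ->
  to_H0 x -> wlim u F -> to_H0 y -> wlim (fun n => star (x n) (star (u n) (y n))) F.
Proof.
  intros Hx Hu Hy HF Hx0 HuF Hy0.
  replace F with (star H0 (star F H0)) by (rewrite star_H0_r, star_H0_l; auto).
  apply star_wlim; auto using star_Dplus, H0_Dplus, to_H0_wlim.
  apply star_wlim; auto using H0_Dplus, to_H0_wlim.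
Qed.

(* If some [star (H j) (u (nn j)) <= u (mm j)] with [H j] tending to [H0] along
   every diverging pair of indices, values of [u] attained frequently at [s] are
   eventually almost attained at [t > s]: compare [u (nn j)] with a step function
   jumping to [c] after [s]. *)
Lemma limsup_le_liminf_of_star_bound u : (forall n, Dplus (u n)) ->
  (forall nn mm, diverging_pair nn mm -> exists H : nat -> R -> R,
     (forall j, Dplus (H j)) /\ to_H0 H /\
     forall j, Dle (star (H j) (u (nn j))) (u (mm j))) ->
  limsup_le_liminf u.
Proof.
  intros Hu HP s t c eps Hst He Hfr. apply NNPP. intros Hn.
  apply not_eventually_frequently in Hn.
  destruct (frequently_subseq _ Hfr) as [nn Hnn].
  destruct (frequently_subseq _ Hn) as [mm Hmm].
  destruct (HP nn mm) as [H [HD [Hh Hle]]]; [intros j; split; [apply Hnn | apply Hmm]|].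
  destruct (Hnn O) as [_ Hn0]. destruct (Hmm O) as [_ Hm0].
  pose proof (Dplus_bounds _ s (Hu (nn O))) as Hb_s.
  pose proof (Dplus_bounds _ t (Hu (mm O))) as Hb_t.
  assert (Hs : 0 <= s).
  { apply Rnot_lt_le. intros Hs. rewrite (Dplus_nonpos _ s (Hu (nn O))) in Hn0; lra. }
  set (step := fun r => if Rle_dec r s then 0 else c).
  assert (Hstep : Dplus step) by (apply step_Dplus; lra).
  assert (Hstep_u : forall j, Dle step (u (nn j))).
  { intros j r. unfold step. destruct (Rle_dec r s).
    - apply (Dplus_bounds _ r (Hu _)).
    - destruct (Hnn j) as [_ Hj]. pose proof (Dplus_nondecr _ (Hu (nn j)) s r ltac:(lra)). lra. }
  assert (Hw : wlim (fun j => star (H j) step) (star H0 step)).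
  { apply star_wlim; auto using H0_Dplus, to_H0_wlim. apply wlim_const. auto. }
  rewrite star_H0_l in Hw by auto.
  destruct Hw as [Hlo _]. destruct (Hlo t eps He) as [N HN].
  specialize (HN N (le_n _)). simpl in HN.
  assert (Hstep_t : step t = c) by (unfold step; destruct (Rle_dec t s); lra).
  pose proof (star_Dle_r (H N) step (u (nn N)) (HD N) Hstep (Hu _) (Hstep_u N) t).
  specialize (Hle N t). destruct (Hmm N) as [_ Hm]. lra.
Qed.

End TriangleFunction.

Lemma DSup_eq S F : is_Dsup S F -> DSup S = F.
Proof.
  intros H. assert (H' : is_Dsup S (DSup S)) by (unfold DSup; apply epsilon_spec; exists F; auto).
  destruct H as [HF [Hu Hl]]. destruct H' as [HF' [Hu' Hl']].
  apply Dle_antisym; auto.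
Qed.

(** * Limits along Cauchy sequences *)

Section ProbMetricSpace.
Variable G : Type.
Variable D : G -> G -> R -> R.
Variable star : (R -> R) -> (R -> R) -> (R -> R).
Hypothesis Htri : is_triangle_function star.
Hypothesis Hcont : continuous_tf star.
Hypothesis Hpm : is_PM_on (fun _ : G => True) star D.

Lemma D_Dplus p q : Dplus (D p q).
Proof. destruct Hpm as [H _]. auto. Qed.

Lemma D_self p : D p p = H0.
Proof. destruct Hpm as [_ [H _]]. apply H; auto. Qed.

Lemma D_sym p q : D p q = D q p.
Proof. destruct Hpm as [_ [_ [H _]]]. auto. Qed.

Lemma D_triangle p q r : Dle (star (D p q) (D q r)) (D p r).
Proof. destruct Hpm as [_ [_ [_ H]]]. auto. Qed.

Definition Cauchy (a : nat -> G) : Prop := to_H0_2 (fun n m => D (a n) (a m)).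

Lemma Cauchy_const x : Cauchy (fun _ => x).
Proof.
  intros t eps Ht He. exists O. intros n m _ _. rewrite D_self. unfold H0.
  destruct (Rle_dec t 0); lra.
Qed.

Lemma Cauchy_pair a nn mm : Cauchy a -> diverging_pair nn mm ->
  to_H0 (fun j => D (a (nn j)) (a (mm j))).
Proof. intros Ha Hp. exact (to_H0_2_pair _ nn mm Ha Hp). Qed.

(* [D (a m) (a n) * D (a n) (b n) * D (b n) (b m) <= D (a m) (b m)]: the star
   bound that makes [D (a n) (b n)] converge. *)
Lemma lim_dist_exists a b : Cauchy a -> Cauchy b ->
  exists F, Dplus F /\ wlim (fun n => D (a n) (b n)) F.
Proof.
  intros Ha Hb. apply wlim_exists; [intros; apply D_Dplus|].
  apply (limsup_le_liminf_of_star_bound star Htri Hcont); [intros; apply D_Dplus|].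
  intros nn mm Hp.
  exists (fun j => star (D (a (mm j)) (a (nn j))) (D (b (nn j)) (b (mm j)))).
  split; [intros; apply star_Dplus; auto using D_Dplus|]. split.
  - apply star_to_H0; auto using D_Dplus, Cauchy_pair, diverging_pair_sym.
  - intros j. set (n := nn j). set (m := mm j).
    rewrite <- star_assoc by auto using D_Dplus.
    rewrite (star_comm star Htri (D (b n) (b m))) by auto using D_Dplus.
    apply Dle_trans with (star (D (a m) (a n)) (D (a n) (b m))); [|apply D_triangle].
    apply star_Dle_r; auto using D_Dplus, star_Dplus. apply D_triangle.
Qed.

Definition lim_dist (a b : nat -> G) : R -> R :=
  epsilon (inhabits H0) (fun F => Dplus F /\ wlim (fun n => D (a n) (b n)) F).

Lemma lim_dist_spec a b : Cauchy a -> Cauchy b ->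
  Dplus (lim_dist a b) /\ wlim (fun n => D (a n) (b n)) (lim_dist a b).
Proof. intros. unfold lim_dist. apply epsilon_spec. apply lim_dist_exists; auto. Qed.

Lemma lim_dist_Dplus a b : Cauchy a -> Cauchy b -> Dplus (lim_dist a b).
Proof. intros. apply lim_dist_spec; auto. Qed.

Lemma lim_dist_wlim a b : Cauchy a -> Cauchy b -> wlim (fun n => D (a n) (b n)) (lim_dist a b).
Proof. intros. apply lim_dist_spec; auto. Qed.

Lemma lim_dist_eq a b F : Cauchy a -> Cauchy b -> Dplus F ->
  wlim (fun n => D (a n) (b n)) F -> lim_dist a b = F.
Proof.
  intros. apply (wlim_unique (fun n => D (a n) (b n))); auto using lim_dist_Dplus, lim_dist_wlim.
Qed.

Lemma lim_dist_ext a b a' b' : Cauchy a -> Cauchy b -> Cauchy a' -> Cauchy b' ->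
  (forall n, D (a n) (b n) = D (a' n) (b' n)) -> lim_dist a b = lim_dist a' b'.
Proof.
  intros Ha Hb Ha' Hb' Hab. apply lim_dist_eq; auto using lim_dist_Dplus.
  replace (fun n => D (a n) (b n)) with (fun n => D (a' n) (b' n))
    by (apply functional_extensionality; auto).
  apply lim_dist_wlim; auto.
Qed.

Lemma lim_dist_const p q : lim_dist (fun _ => p) (fun _ => q) = D p q.
Proof. apply lim_dist_eq; auto using Cauchy_const, D_Dplus. apply wlim_const, D_Dplus. Qed.

Lemma lim_dist_self a : Cauchy a -> lim_dist a a = H0.
Proof.
  intros Ha. rewrite (lim_dist_ext a a (fun _ => a O) (fun _ => a O)), lim_dist_const;
    auto using Cauchy_const, D_self.
  intros. rewrite !D_self. auto.
Qed.

Lemma lim_dist_sym a b : Cauchy a -> Cauchy b -> lim_dist a b = lim_dist b a.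
Proof. intros. apply lim_dist_ext; auto. intros. apply D_sym. Qed.

Lemma lim_dist_triangle a b c : Cauchy a -> Cauchy b -> Cauchy c ->
  Dle (star (lim_dist a b) (lim_dist b c)) (lim_dist a c).
Proof.
  intros. apply (wlim_Dle (fun n => star (D (a n) (b n)) (D (b n) (c n))) (fun n => D (a n) (c n))).
  - apply star_Dplus; auto using lim_dist_Dplus.
  - apply star_wlim; auto using D_Dplus, lim_dist_Dplus, lim_dist_wlim.
  - apply lim_dist_wlim; auto.
  - apply eventually_forall. intros. apply D_triangle.
Qed.

Definition lim_fn (a : nat -> G) (x : G) : R -> R := lim_dist a (fun _ => x).

Lemma lim_fn_Dplus a x : Cauchy a -> Dplus (lim_fn a x).
Proof. intros. apply lim_dist_Dplus; auto using Cauchy_const. Qed.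

Lemma lim_fn_wlim a x : Cauchy a -> wlim (fun n => D (a n) x) (lim_fn a x).
Proof. intros. apply (lim_dist_wlim a (fun _ => x)); auto using Cauchy_const. Qed.

Lemma lim_fn_lip a x y : Cauchy a -> Dle (star (D x y) (lim_fn a y)) (lim_fn a x).
Proof.
  intros Ha. apply (wlim_Dle (fun n => star (D x y) (D (a n) y)) (fun n => D (a n) x)).
  - apply star_Dplus; auto using D_Dplus, lim_fn_Dplus.
  - apply star_wlim; auto using D_Dplus, lim_fn_Dplus, lim_fn_wlim. apply wlim_const, D_Dplus.
  - apply lim_fn_wlim; auto.
  - apply eventually_forall. intros n. rewrite star_comm, (D_sym x y) by auto using D_Dplus.
    apply D_triangle.
Qed.

Lemma lim_fn_Pi a : Cauchy a -> Pi D star (lim_fn a).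
Proof.
  intros Ha. split.
  - split; [intros; apply lim_fn_Dplus; auto|]. intros x y. apply lim_fn_lip; auto.
  - exists a. split.
    + apply to_H0_2_wconv2; auto. intros. apply D_Dplus.
    + intros x. apply wlim_wconv; auto using D_Dplus, lim_fn_Dplus, lim_fn_wlim.
Qed.

Lemma Pi_lim_fn f : Pi D star f -> exists a, Cauchy a /\ f = lim_fn a.
Proof.
  intros [[Hf _] [a [Hc Hw]]]. assert (Ha : Cauchy a) by (apply wconv2_to_H0_2; auto).
  exists a. split; auto. apply functional_extensionality. intros x.
  apply (wlim_unique (fun n => D (a n) x)); auto using lim_fn_Dplus, lim_fn_wlim.
  apply wconv_wlim; auto using D_Dplus.
Qed.

Lemma lim_fn_diag a : Cauchy a -> to_H0 (fun k => lim_fn a (a k)).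
Proof.
  intros Ha t eps Ht He. destruct (Ha (t / 2) (eps / 2) ltac:(lra) ltac:(lra)) as [N HN].
  exists N. intros k Hk. destruct (lim_fn_wlim a (a k) Ha) as [_ Hhi].
  destruct (Hhi (t / 2) t (eps / 2) ltac:(lra) ltac:(lra)) as [N' HN'].
  specialize (HN' (max N N') ltac:(lia)). specialize (HN (max N N') k ltac:(lia) Hk). lra.
Qed.

Lemma lim_fn_const y : lim_fn (fun _ => y) = delta D y.
Proof.
  apply functional_extensionality. intros x. unfold delta, lim_fn.
  rewrite lim_dist_const. apply D_sym.
Qed.

Lemma lim_fn_eq a b : Cauchy a -> Cauchy b -> lim_dist a b = H0 -> lim_fn a = lim_fn b.
Proof.
  assert (Hle : forall a b x, Cauchy a -> Cauchy b -> lim_dist a b = H0 ->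
                  Dle (lim_fn b x) (lim_fn a x)).
  { intros a' b' x Ha Hb Hab.
    apply (wlim_Dle (fun n => star (D (a' n) (b' n)) (D (b' n) x)) (fun n => D (a' n) x)).
    - apply lim_fn_Dplus; auto.
    - replace (lim_fn b' x) with (star (lim_dist a' b') (lim_fn b' x))
        by (rewrite Hab, star_H0_l; auto using lim_fn_Dplus).
      apply star_wlim; auto using D_Dplus, lim_dist_Dplus, lim_fn_Dplus, lim_dist_wlim, lim_fn_wlim.
    - apply lim_fn_wlim; auto.
    - apply eventually_forall. intros. apply D_triangle. }
  intros Ha Hb Hab. apply functional_extensionality. intros x.
  apply Dle_antisym; apply Hle; auto. rewrite lim_dist_sym; auto.
Qed.

(* Least upper bound: along [x = a k] the three factors tend to [H0],
   [lim D (a k) (b k)] and [H0]. *)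
Lemma lim_dist_is_Dsup a b : Cauchy a -> Cauchy b ->
  is_Dsup (fun H => exists x, H = star (lim_fn a x) (lim_fn b x)) (lim_dist a b).
Proof.
  intros Ha Hb. split; [apply lim_dist_Dplus; auto | split].
  - intros H [x ->].
    apply (wlim_Dle (fun n => star (D (a n) x) (D (b n) x)) (fun n => D (a n) (b n))).
    + apply star_Dplus; auto using lim_fn_Dplus.
    + apply star_wlim; auto using D_Dplus, lim_fn_Dplus, lim_fn_wlim.
    + apply lim_dist_wlim; auto.
    + apply eventually_forall. intros n. rewrite (D_sym (b n) x). apply D_triangle.
  - intros F' HF' Hub.
    apply (wlim_Dle (fun k => star (lim_fn a (a k)) (star (D (a k) (b k)) (lim_fn b (b k))))
                    (fun _ => F')).
    + apply lim_dist_Dplus; auto.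
    + apply star_to_H0_wlim; auto using lim_fn_Dplus, D_Dplus, lim_dist_Dplus, lim_fn_diag,
        lim_dist_wlim.
    + apply wlim_const; auto.
    + apply eventually_forall. intros k.
      apply Dle_trans with (star (lim_fn a (a k)) (lim_fn b (a k))).
      * apply star_Dle_r; auto using star_Dplus, D_Dplus, lim_fn_Dplus. apply lim_fn_lip; auto.
      * apply Hub. exists (a k). auto.
Qed.

Lemma bbD_lim_fn a b : Cauchy a -> Cauchy b -> bbD star (lim_fn a) (lim_fn b) = lim_dist a b.
Proof. intros. apply DSup_eq, lim_dist_is_Dsup; auto. Qed.

Lemma bbD_Dplus f g : Pi D star f -> Pi D star g -> Dplus (bbD star f g).
Proof.
  intros Hf Hg.
  destruct (Pi_lim_fn f Hf) as [a [Ha ->]]. destruct (Pi_lim_fn g Hg) as [b [Hb ->]].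
  rewrite bbD_lim_fn; auto. apply lim_dist_Dplus; auto.
Qed.

Lemma Pi_PM : is_PM_on (Pi D star) star (bbD star).
Proof.
  split; [exact bbD_Dplus | split; [|split]]; intros f g.
  - intros Hf Hg.
    destruct (Pi_lim_fn f Hf) as [a [Ha ->]]. destruct (Pi_lim_fn g Hg) as [b [Hb ->]].
    rewrite bbD_lim_fn; auto. split.
    + apply lim_fn_eq; auto.
    + intros Heq. rewrite <- (bbD_lim_fn a b), <- Heq, bbD_lim_fn by auto.
      apply lim_dist_self; auto.
  - intros Hf Hg.
    destruct (Pi_lim_fn f Hf) as [a [Ha ->]]. destruct (Pi_lim_fn g Hg) as [b [Hb ->]].
    rewrite !bbD_lim_fn; auto. apply lim_dist_sym; auto.
  - intros h Hf Hg Hh.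
    destruct (Pi_lim_fn f Hf) as [a [Ha ->]]. destruct (Pi_lim_fn g Hg) as [b [Hb ->]].
    destruct (Pi_lim_fn h Hh) as [c [Hc ->]].
    rewrite !bbD_lim_fn; auto. apply lim_dist_triangle; auto.
Qed.

Lemma Pi_near_H0 f eps : Pi D star f -> 0 < eps -> exists x, 1 - eps < f x eps.
Proof.
  intros Hf He. destruct (Pi_lim_fn f Hf) as [a [Ha ->]].
  destruct (lim_fn_diag a Ha eps eps He He) as [N HN]. exists (a N). apply HN. lia.
Qed.

Lemma star_le_bbD f g x : Pi D star f -> Pi D star g -> Dle (star (f x) (g x)) (bbD star f g).
Proof.
  intros Hf Hg.
  destruct (Pi_lim_fn f Hf) as [a [Ha ->]]. destruct (Pi_lim_fn g Hg) as [b [Hb ->]].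
  rewrite bbD_lim_fn; auto. apply (lim_dist_is_Dsup a b Ha Hb). exists x. auto.
Qed.

Lemma star_bbD_le_D f g x y : Pi D star f -> Pi D star g ->
  Dle (star (f x) (star (bbD star f g) (g y))) (D x y).
Proof.
  intros Hf Hg.
  destruct (Pi_lim_fn f Hf) as [a [Ha ->]]. destruct (Pi_lim_fn g Hg) as [b [Hb ->]].
  rewrite bbD_lim_fn, <- lim_dist_const; auto. unfold lim_fn.
  rewrite (lim_dist_sym a (fun _ => x)), star_assoc;
    auto using Cauchy_const, lim_dist_Dplus.
  apply Dle_trans with (star (lim_dist (fun _ => x) b) (lim_dist b (fun _ => y)));
    [|apply lim_dist_triangle; auto using Cauchy_const].
  apply star_Dle_l; auto using star_Dplus, lim_dist_Dplus, Cauchy_const.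
  apply lim_dist_triangle; auto using Cauchy_const.
Qed.

Lemma Cauchy_of_Pi_diag (z : nat -> G -> R -> R) (c : nat -> G) :
  (forall n, Pi D star (z n)) -> to_H0_2 (fun n p => bbD star (z n) (z p)) ->
  to_H0 (fun k => z k (c k)) -> Cauchy c.
Proof.
  intros Hz Hzz Hzc. apply to_H0_2_of_pairs. intros nn mm Hp.
  assert (HzD : forall n x, Dplus (z n x)) by (intros n x; apply (proj1 (proj1 (Hz n)))).
  assert (HbD : forall n p, Dplus (bbD star (z n) (z p))) by (intros; apply bbD_Dplus; auto).
  apply (to_H0_Dle (fun j => star (z (nn j) (c (nn j)))
           (star (bbD star (z (nn j)) (z (mm j))) (z (mm j) (c (mm j)))))).
  - apply star_to_H0; auto using star_Dplus.
    + apply (to_H0_subseq _ nn Hzc). apply Hp.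
    + apply star_to_H0; auto.
      * apply (to_H0_2_pair _ nn mm Hzz Hp).
      * apply (to_H0_subseq _ mm Hzc). apply Hp.
  - intros j. apply star_bbD_le_D; auto.
Qed.

(* Diagonal argument: pick [c k] with [z k (c k)] within [1/(k+1)] of [H0]; then
   [lim_fn c] is the limit of [z]. *)
Lemma Pi_complete : is_complete_on (Pi D star) (bbD star).
Proof.
  intros z Hz Hzz.
  assert (Hc : forall k, exists x, 1 - / INR (S k) < z k x (/ INR (S k))).
  { intros k. apply Pi_near_H0; auto. apply Rinv_0_lt_compat, lt_0_INR. lia. }
  destruct (Hc O) as [x0 _].
  set (c := fun k => epsilon (inhabits x0) (fun x => 1 - / INR (S k) < z k x (/ INR (S k)))).
  assert (Hzc : to_H0 (fun k => z k (c k))).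
  { apply to_H0_diag; [intros; apply (proj1 (proj1 (Hz k)))|].
    intros k. unfold c. apply epsilon_spec, Hc. }
  assert (Hcau : Cauchy c).
  { apply (Cauchy_of_Pi_diag z); auto. apply wconv2_to_H0_2. auto. }
  exists (lim_fn c). split; [apply lim_fn_Pi; auto|].
  assert (HzcD : forall n, Dplus (bbD star (z n) (lim_fn c))) by auto using bbD_Dplus, lim_fn_Pi.
  apply wlim_wconv, to_H0_wlim; auto using H0_Dplus.
  apply (to_H0_Dle (fun n => star (z n (c n)) (lim_fn c (c n)))).
  - apply star_to_H0; auto using lim_fn_Dplus, lim_fn_diag.
    intros n. apply (proj1 (proj1 (Hz n))).
  - intros n. apply star_le_bbD; auto using lim_fn_Pi.
Qed.

(** * The group [Pi D star] *)

Section ProbMetricGroup.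
Variable mul : G -> G -> G.
Variable e : G.
Hypothesis Hgrp : is_group_on (fun _ : G => True) mul e.
Hypothesis Hinv : is_invariant_on (fun _ : G => True) mul D.

Lemma D_mul_r p q r : D (mul p r) (mul q r) = D p q.
Proof. apply (Hinv p q r); auto. Qed.

Lemma D_mul_l p q r : D (mul r p) (mul r q) = D p q.
Proof. apply (Hinv p q r); auto. Qed.

Lemma mul_assoc x y z : mul x (mul y z) = mul (mul x y) z.
Proof. destruct Hgrp as [_ [_ [H _]]]. auto. Qed.

Lemma mul_e_l x : mul e x = x.
Proof. destruct Hgrp as [_ [_ [_ [H _]]]]. apply H. auto. Qed.

Lemma mul_e_r x : mul x e = x.
Proof. destruct Hgrp as [_ [_ [_ [H _]]]]. apply H. auto. Qed.

Definition inv (x : G) : G :=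
  epsilon (inhabits e) (fun y => mul x y = e /\ mul y x = e).

Lemma mul_inv x : mul x (inv x) = e /\ mul (inv x) x = e.
Proof.
  unfold inv. apply epsilon_spec. destruct Hgrp as [_ [_ [_ [_ H]]]].
  destruct (H x I) as [y [_ Hy]]. exists y. auto.
Qed.

Lemma mul_inv_l_cancel y x : mul y (mul (inv y) x) = x.
Proof. rewrite mul_assoc, (proj1 (mul_inv y)), mul_e_l. auto. Qed.

Lemma D_inv p q : D (inv p) (inv q) = D q p.
Proof.
  rewrite <- (D_mul_l (inv p) (inv q) p), (proj1 (mul_inv p)).
  rewrite <- (D_mul_r e (mul p (inv q)) q), mul_e_l, <- mul_assoc, (proj2 (mul_inv q)), mul_e_r.
  reflexivity.
Qed.

Lemma Cauchy_mul a b : Cauchy a -> Cauchy b -> Cauchy (fun n => mul (a n) (b n)).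
Proof.
  intros Ha Hb. apply to_H0_2_of_pairs. intros nn mm Hp.
  apply (to_H0_Dle (fun j => star (D (a (nn j)) (a (mm j))) (D (b (nn j)) (b (mm j))))).
  - apply star_to_H0; auto using D_Dplus, Cauchy_pair.
  - intros j. rewrite <- (D_mul_r (a (nn j)) (a (mm j)) (b (nn j))).
    rewrite <- (D_mul_l (b (nn j)) (b (mm j)) (a (mm j))). apply D_triangle.
Qed.

Lemma Cauchy_inv a : Cauchy a -> Cauchy (fun n => inv (a n)).
Proof.
  intros Ha t eps Ht He. destruct (Ha t eps Ht He) as [N HN]. exists N.
  intros n m Hn Hm. rewrite D_inv. apply HN; auto.
Qed.

(* Least upper bound: split [x = a k * (inv (a k) * x)]. *)
Lemma lim_fn_mul_is_Dsup a b x : Cauchy a -> Cauchy b ->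
  is_Dsup (fun H => exists y z, mul y z = x /\ H = star (lim_fn a y) (lim_fn b z))
          (lim_fn (fun n => mul (a n) (b n)) x).
Proof.
  intros Ha Hb. pose proof (Cauchy_mul a b Ha Hb) as Hab.
  split; [apply lim_fn_Dplus; auto | split].
  - intros H [y [z [Hyz ->]]].
    apply (wlim_Dle (fun n => star (D (a n) y) (D (b n) z)) (fun n => D (mul (a n) (b n)) x)).
    + apply star_Dplus; auto using lim_fn_Dplus.
    + apply star_wlim; auto using D_Dplus, lim_fn_Dplus, lim_fn_wlim.
    + apply lim_fn_wlim; auto.
    + apply eventually_forall. intros n.
      rewrite <- (D_mul_r (a n) y z), Hyz, <- (D_mul_l (b n) z (a n)).
      rewrite star_comm by auto using D_Dplus. apply D_triangle.
  - intros F' HF' Hub.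
    apply (wlim_Dle (fun k => star (lim_fn a (a k))
                                   (star (D (mul (a k) (b k)) x) (lim_fn b (b k))))
                    (fun _ => F')).
    + apply lim_fn_Dplus; auto.
    + apply star_to_H0_wlim; auto using lim_fn_Dplus, D_Dplus, lim_fn_diag, lim_fn_wlim.
    + apply wlim_const; auto.
    + apply eventually_forall. intros k. set (z := mul (inv (a k)) x).
      apply Dle_trans with (star (lim_fn a (a k)) (lim_fn b z)).
      * apply star_Dle_r; auto using star_Dplus, D_Dplus, lim_fn_Dplus.
        replace (D (mul (a k) (b k)) x) with (D z (b k)); [apply lim_fn_lip; auto|].
        rewrite <- (D_mul_l z (b k) (a k)), D_sym. unfold z. rewrite mul_inv_l_cancel. auto.
      * apply Hub. exists (a k), z. split; auto. apply mul_inv_l_cancel.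
Qed.

Lemma odot_lim_fn a b : Cauchy a -> Cauchy b ->
  odot mul star (lim_fn a) (lim_fn b) = lim_fn (fun n => mul (a n) (b n)).
Proof.
  intros. apply functional_extensionality. intros x. apply DSup_eq, lim_fn_mul_is_Dsup; auto.
Qed.

Lemma Pi_odot f g : Pi D star f -> Pi D star g -> Pi D star (odot mul star f g).
Proof.
  intros Hf Hg.
  destruct (Pi_lim_fn f Hf) as [a [Ha ->]]. destruct (Pi_lim_fn g Hg) as [b [Hb ->]].
  rewrite odot_lim_fn; auto. apply lim_fn_Pi, Cauchy_mul; auto.
Qed.

Lemma Pi_group : is_group_on (Pi D star) (odot mul star) (delta D e).
Proof.
  split; [|split; [exact Pi_odot | split; [|split]]].
  - rewrite <- lim_fn_const. apply lim_fn_Pi, Cauchy_const.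
  - intros f g h Hf Hg Hh.
    destruct (Pi_lim_fn f Hf) as [a [Ha ->]]. destruct (Pi_lim_fn g Hg) as [b [Hb ->]].
    destruct (Pi_lim_fn h Hh) as [c [Hc ->]].
    rewrite !odot_lim_fn; auto using Cauchy_mul.
    f_equal. apply functional_extensionality. intros. apply mul_assoc.
  - intros f Hf. destruct (Pi_lim_fn f Hf) as [a [Ha ->]].
    rewrite <- lim_fn_const, !odot_lim_fn; auto using Cauchy_const.
    split; f_equal; apply functional_extensionality; intros; [apply mul_e_l | apply mul_e_r].
  - intros f Hf. destruct (Pi_lim_fn f Hf) as [a [Ha ->]].
    exists (lim_fn (fun n => inv (a n))). split; [apply lim_fn_Pi, Cauchy_inv; auto|].
    rewrite <- lim_fn_const, !odot_lim_fn; auto using Cauchy_inv.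
    split; f_equal; apply functional_extensionality; intros; apply mul_inv.
Qed.

Lemma Pi_invariant : is_invariant_on (Pi D star) (odot mul star) (bbD star).
Proof.
  intros f g h Hf Hg Hh.
  destruct (Pi_lim_fn f Hf) as [a [Ha ->]]. destruct (Pi_lim_fn g Hg) as [b [Hb ->]].
  destruct (Pi_lim_fn h Hh) as [c [Hc ->]].
  rewrite !odot_lim_fn, !bbD_lim_fn; auto using Cauchy_mul.
  split; apply lim_dist_ext; auto using Cauchy_mul; intros n; [apply D_mul_r | apply D_mul_l].
Qed.

End ProbMetricGroup.

End ProbMetricSpace.

Theorem mainTheorem12 :
  forall (G : Type) (mul : G -> G -> G) (e : G) (D : G -> G -> R -> R)
    (star : (R -> R) -> (R -> R) -> (R -> R)),
    is_triangle_function star ->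
    continuous_tf star ->
    is_group_on (fun _ : G => True) mul e ->
    is_PM_on (fun _ : G => True) star D ->
    is_invariant_on (fun _ : G => True) mul D ->
    (forall f g, Pi D star f -> Pi D star g -> Pi D star (odot mul star f g)) /\
    is_group_on (Pi D star) (odot mul star) (delta D e) /\
    is_PM_on (Pi D star) star (bbD star) /\
    is_invariant_on (Pi D star) (odot mul star) (bbD star) /\
    is_complete_on (Pi D star) (bbD star).
Proof.
  intros G mul e D star Htri Hcont Hgrp Hpm Hinv.
  split; [|split; [|split; [|split]]].
  - exact (Pi_odot G D star Htri Hcont Hpm mul e Hgrp Hinv).
  - exact (Pi_group G D star Htri Hcont Hpm mul e Hgrp Hinv).
  - exact (Pi_PM G D star Htri Hcont Hpm).
  - exact (Pi_invariant G D star Htri Hcont Hpm mul e Hgrp Hinv).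
  - exact (Pi_complete G D star Htri Hcont Hpm).
Qed.
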